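(* Let $A\in\mathbb{S}^n$ be a non-zero diagonal matrix and let $\mathcal{L}\subset\mathbb{S}^n$ be the linear subspace defined by $\kappa_{ij}=0$ for all $i\neq j$ together with $\mathrm{tr}(AK)=0$ (where $K=(\kappa_{ij})$), and assume $\mathcal{L}$ is regular. Then the ML degree of $\mathcal{L}$ is $\mathrm{rk}(A)-1$.
   Context: $\mathbb{S}^n$ denotes the space of complex symmetric $n\times n$ matrices. A linear subspace $\mathcal{L}$ is regular if it contains a full-rank matrix. $\mathcal{L}^\perp=\{\Sigma:\mathrm{tr}(K\Sigma)=0\ \forall K\in\mathcal{L}\}$. The reciprocal variety $\mathcal{L}^{-1}$ is the Zariski closure of the set of inverses of invertible matrices in $\mathcal{L}$. The ML degree of $\mathcal{L}$ is the number of matrices in $\mathcal{L}^{-1}\cap(\mathcal{L}^\perp+S)$ for generic $S\in\mathbb{S}^n$. *)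

(* Complex numbers are modelled as R[i] (mathcomp-real-closed
   `complex`) for an arbitrary R : realType (a complete archimedean ordered
   field, i.e. the real numbers).  Polynomial functions on matrix space are
   multivariate polynomials ({mpoly _[n*n]}) in the n*n entries. *)
From HB Require Import structures.
From mathcomp Require Import all_boot all_order all_algebra.
From mathcomp Require Import reals complex mpoly.
Set Implicit Arguments.
Unset Strict Implicit.
Unset Printing Implicit Defensive.
Import Order.TTheory GRing.Theory Num.Theory.
Local Open Scope ring_scope.

Section MLDegree.
Variables (F : fieldType) (n : nat).

Definition sym_mx (M : 'M[F]_n) : Prop := M^T = M.

Definition mx_eval (p : {mpoly F[n * n]}) (M : 'M[F]_n) : F :=
  p.@[fun k => mxvec M 0 k].

Definition zariski_closure (X : 'M[F]_n -> Prop) : 'M[F]_n -> Prop :=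
  fun M => forall p : {mpoly F[n * n]},
    (forall N, X N -> mx_eval p N = 0) -> mx_eval p M = 0.

Definition regular (L : 'M[F]_n -> Prop) : Prop :=
  exists K, L K /\ K \in unitmx.

Definition orth_space (L : 'M[F]_n -> Prop) : 'M[F]_n -> Prop :=
  fun Sigma => sym_mx Sigma /\ forall K, L K -> \tr (K *m Sigma) = 0.

Definition reciprocal_variety (L : 'M[F]_n -> Prop) : 'M[F]_n -> Prop :=
  zariski_closure (fun M => exists K, [/\ L K, K \in unitmx & M = invmx K]).

Definition has_card (P : 'M[F]_n -> Prop) (d : nat) : Prop :=
  exists s : seq 'M[F]_n, [/\ uniq s, size s = d & forall M, P M <-> M \in s].

(* the ML degree of L is d: for generic S in S^n (i.e. for all S in a nonempty
   Zariski open subset of S^n, namely the non-vanishing locus of a polynomial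
   that does not vanish identically on S^n), the set
   L^{-1} \cap (L^perp + S) has exactly d elements *)
Definition ml_degree_is (L : 'M[F]_n -> Prop) (d : nat) : Prop :=
  exists p : {mpoly F[n * n]},
    (exists S0, sym_mx S0 /\ mx_eval p S0 != 0) /\
    forall S, sym_mx S -> mx_eval p S != 0 ->
      has_card (fun M => reciprocal_variety L M /\ orth_space L (M - S)) d.

Definition diag_trace_space (A : 'M[F]_n) : 'M[F]_n -> Prop :=
  fun K => [/\ sym_mx K, (forall i j, i != j -> K i j = 0) & \tr (A *m K) = 0].

End MLDegree.

(* Write a_i = A_ii and r = rk A = #{i | a_i <> 0}.  The space L consists of
   the diagonal K with sum_i a_i k_i = 0, so every point of its reciprocal
   variety is diagonal with sum_i a_i prod_(j <> i) m_j = 0, and a diagonal M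
   lies in L^perp + S iff diag M = t diag A + diag S for some t.  The
   solutions are therefore the matrices diag (t a + diag S) with h_S'(t) = 0,
   where h_S(t) = prod_i (a_i t + S_ii); conversely such a matrix is the
   inverse of diag (1 / (a_i t + S_ii)), which lies in L, as soon as
   h_S(t) <> 0.  For S off the zero set of
   lead(H) * Res(H, H') * Res(H', H''), H the polynomial h with the entries
   of S as indeterminates, h_S has degree r and h_S and h_S' are separable,
   so there are exactly r - 1 solutions.  That polynomial is not identically
   zero: a diagonal S can make h_S proportional to X^r - X. *)
From HB Require Import structures.
From mathcomp Require Import all_boot all_order all_algebra.
From mathcomp Require Import reals complex mpoly separable ring.
Import Order.TTheory GRing.Theory Num.Theory.
Set Implicit Arguments.
Unset Strict Implicit.
Unset Printing Implicit Defensive.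
Local Open Scope ring_scope.

Lemma map_resultant_rmorph (aR rR : comNzRingType) (f : {rmorphism aR -> rR})
    (p q : {poly aR}) :
  f (lead_coef p) != 0 -> f (lead_coef q) != 0 ->
  f (resultant p q) = resultant (map_poly f p) (map_poly f q).
Proof.
move=> nz_fp nz_fq; rewrite /resultant /Sylvester_mx !size_map_poly_id0 //.
rewrite -det_map_mx /= map_col_mx; congr (\det (col_mx _ _));
  by apply: map_lin1_mx => v; rewrite map_poly_rV rmorphM /= map_rVpoly.
Qed.

Lemma size_deriv_char0 (R : numDomainType) (p : {poly R}) :
  size p^`() = (size p).-1.
Proof.
have [lep1|lt1p] := leqP (size p) 1.
  by rewrite {1}[p]size1_polyC // derivC size_poly0 -subn1 (eqnP lep1).
rewrite size_poly_eq // mulrn_eq0 -subn2 -subSn // subn2.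
by rewrite lead_coef_eq0 -size_poly_eq0 -(subnKC lt1p).
Qed.

Lemma lead_coef_map_neq0 (aR rR : nzRingType) (f : {rmorphism aR -> rR})
    (p : {poly aR}) :
  (size p <= size (map_poly f p))%N -> map_poly f p != 0 -> f (lead_coef p) != 0.
Proof.
move=> le_p_fp fp_neq0.
have size_fp : size (map_poly f p) = size p.
  by apply/eqP; rewrite eqn_leq le_p_fp size_poly.
by move: fp_neq0; rewrite -lead_coef_eq0 lead_coefE size_fp coef_map.
Qed.

Lemma lead_coef_map_deriv_neq0 (aR rR : nzRingType) (f : {rmorphism aR -> rR})
    (p : {poly aR}) :
  size (map_poly f p^`()) = (size p).-1 -> (1 < size p)%N ->
  f (lead_coef p^`()) != 0.
Proof.
move=> size_fp' lt1p.
have : (0 < size (map_poly f p^`()))%N by rewrite size_fp' -(subnKC lt1p).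
rewrite size_poly_gt0 => fp'_neq0; apply: lead_coef_map_neq0 => //.
by apply: leq_trans (size_poly _ _) _; rewrite -size_fp'.
Qed.

Lemma resultant_neq0 (R : idomainType) (p q : {poly R}) :
  p != 0 -> (resultant p q != 0) = coprimep p q.
Proof.
move=> p_neq0; rewrite resultant_eq0 coprimep_def -leqNgt.
have : (0 < size (gcdp p q))%N by rewrite size_poly_gt0 gcdp_eq0 negb_and p_neq0.
by case: (size _) => [|[|]].
Qed.

Lemma resultant_deriv_neq0 (R : idomainType) (p : {poly R}) :
  p != 0 -> (resultant p p^`() != 0) = separable_poly p.
Proof. by move=> p_neq0; rewrite unlock resultant_neq0. Qed.

Lemma deriv_prod (R : comNzRingType) (I : eqType) (r : seq I) (F : I -> {poly R}) :
  uniq r ->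
  (\prod_(i <- r) F i)^`() = \sum_(i <- r) (F i)^`() * \prod_(j <- r | j != i) F j.
Proof.
elim: r => [|x r IH] /=; first by rewrite !big_nil derivC.
case/andP=> x_notin_r uniq_r; rewrite !big_cons derivM IH // eqxx /= mulr_sumr.
congr (_ + _).
  congr (_ * _); rewrite big_seq [RHS]big_seq_cond; apply: eq_bigl => j.
  case: (boolP (j \in r)) => //= j_in_r.
  by apply/esym; apply: contraNneq x_notin_r => <-.
rewrite !big_seq; apply: eq_bigr => i i_in_r; rewrite big_cons.
have -> : x != i by apply: contraNneq x_notin_r => ->.
by rewrite mulrCA.
Qed.

Lemma separable_roots (F : closedFieldType) (p : {poly F}) :
  separable_poly p ->
  exists2 rs : seq F, uniq rs & size rs = (size p).-1 /\ forall x, root p x = (x \in rs).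
Proof.
move=> sep_p; have p_neq0 := separable_poly_neq0 sep_p.
have [rs p_eq] := closed_field_poly_normal p.
have lc_neq0 : lead_coef p != 0 by rewrite lead_coef_eq0.
exists rs.
  by rewrite -separable_prod_XsubC -(eqp_separable (eqp_scale _ lc_neq0)) -p_eq.
split; first by rewrite p_eq size_scale // size_prod_XsubC.
by move=> x; rewrite p_eq rootZ // root_prod_XsubC.
Qed.

Section XnsubX.
Variables (F : numClosedFieldType) (k : nat).
Local Notation Q := ('X^(k.+2) - 'X : {poly F}).

Lemma deriv_XnsubX : Q^`() = 'X^(k.+1) *+ k.+2 - 1.
Proof. by rewrite derivB derivXn derivX. Qed.

Lemma root_deriv_XnsubX_neq0 t : root Q^`() t -> t != 0.
Proof.
apply: contraTneq => ->; rewrite deriv_XnsubX rootE hornerD hornerN hornerMn.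
by rewrite hornerXn hornerC expr0n mul0rn sub0r oppr_eq0 oner_eq0.
Qed.

Lemma separable_XnsubX : separable_poly Q.
Proof.
rewrite unlock; apply: Pdiv.ClosedField.root_coprimep => t.
rewrite rootE !hornerE subr_eq0 => /eqP tQ.
have [-> | t_neq0] := eqVneq t 0.
  by apply/negP => /root_deriv_XnsubX_neq0; rewrite eqxx.
have t1 : t ^+ k.+1 = 1 by apply: (mulIf t_neq0); rewrite -exprSr mul1r.
rewrite deriv_XnsubX hornerD hornerN hornerMn hornerXn hornerC t1.
by rewrite mulrSr addrK pnatr_eq0.
Qed.

Lemma separable_deriv_XnsubX : separable_poly Q^`().
Proof.
rewrite unlock; apply: Pdiv.ClosedField.root_coprimep => t /root_deriv_XnsubX_neq0 t_neq0.
rewrite deriv_XnsubX derivB derivMn derivXn derivC subr0 hornerMn hornerMn hornerXn.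
by rewrite !mulrn_eq0 expf_eq0 (negPf t_neq0) andbF.
Qed.

End XnsubX.

Lemma sumr_kronecker (R : nzSemiRingType) (I : finType) (j : I) (g : I -> R) :
  \sum_l (l == j)%:R * g l = g j.
Proof.
rewrite (bigD1 j) //= eqxx mul1r big1 ?addr0 // => l /negPf ->.
by rewrite mul0r.
Qed.

Lemma diag_mx_of_is_diag (V : nmodType) n (A : 'M[V]_n) :
  is_diag_mx A -> A = diag_mx (\row_i A i i).
Proof.
move=> /is_diag_mxP A_diag; apply/matrixP => i j; rewrite !mxE.
by have [->|ij] := eqVneq i j; rewrite ?mulr1n // mulr0n A_diag.
Qed.

Lemma rank_diag_mx (F : fieldType) n (d : 'rV[F]_n) :
  \rank (diag_mx d) = #|[set i | d 0 i != 0]|.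
Proof.
rewrite -sum1dep_card big_mkcond /=.
elim: n d => [|n IH] d; first by rewrite thinmx0 mxrank0 big_ord0.
have := diag_mx_row (lsubmx (d : 'rV_(1 + n))) (rsubmx (d : 'rV_(1 + n))).
rewrite hsubmxK => ->; rewrite (@rank_diag_block_mx F 1 1 n n) IH rank_rV.
rewrite big_ord_recl; congr (_ + _)%N; last first.
  by apply: eq_bigr => i _; rewrite mxE (_ : rshift 1 i = lift 0 i) //; apply/val_inj.
have lshift0 : lshift n (0 : 'I_1) = 0 by apply/val_inj.
have -> : (diag_mx (lsubmx (d : 'rV_(1 + n))) == 0) = (d 0 0 == 0).
  apply/eqP/eqP => [/matrixP/(_ 0 0) | d00].
    by rewrite !mxE eqxx mulr1n lshift0.
  by apply/matrixP => i j; rewrite !ord1 !mxE lshift0 d00 mul0rn.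
by case: (_ != _).
Qed.

Lemma rank_is_diag_mx (F : fieldType) n (A : 'M[F]_n) :
  is_diag_mx A -> \rank A = #|[set i | A i i != 0]|.
Proof.
move/diag_mx_of_is_diag => {1}->; rewrite rank_diag_mx.
by apply: eq_card => i; rewrite !inE mxE.
Qed.

Lemma mxtrace_diag_mull (R : comNzRingType) n (k : 'rV[R]_n) (X : 'M[R]_n) :
  \tr (diag_mx k *m X) = \sum_i k 0 i * X i i.
Proof. by rewrite mul_diag_mx /mxtrace; apply: eq_bigr => i _; rewrite mxE. Qed.

Lemma unitmx_diag (F : fieldType) n (d : 'rV[F]_n) :
  (diag_mx d \in unitmx) = [forall i, d 0 i != 0].
Proof.
rewrite unitmxE det_diag unitfE.
by apply/prodf_neq0/forallP => d_neq0 i => [|_]; apply: d_neq0.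
Qed.

Lemma invmx_diag (F : fieldType) n (d : 'rV[F]_n) :
  (forall i, d 0 i != 0) -> invmx (diag_mx d) = diag_mx (\row_i (d 0 i)^-1).
Proof.
move=> d_neq0; have d_unit : diag_mx d \in unitmx by rewrite unitmx_diag; apply/forallP.
rewrite -[RHS](mulKmx d_unit) mulmx_diag.
rewrite (_ : \row_j _ = const_mx 1) ?diag_const_mx ?mulmx1 //.
by apply/rowP => j; rewrite !mxE mulfV.
Qed.

Lemma mx_eval_X (F : fieldType) n (M : 'M[F]_n) i j :
  mx_eval 'X_(mxvec_index i j) M = M i j.
Proof. by rewrite /mx_eval mevalXU mxvecE. Qed.

Section Pencil.
Variables (R : comNzRingType) (n : nat).
Implicit Types a s m : 'I_n -> R.

(* [pencil_poly a s] is det (t diag a + diag s) as a polynomial in t, and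
   [adj_trace a m] is tr (diag a * adj (diag m)). *)
Definition pencil_poly a s : {poly R} := \prod_i ((a i)%:P * 'X + (s i)%:P).

Definition adj_trace a m : R := \sum_i a i * \prod_(j | j != i) m j.

Lemma horner_pencil_poly a s t : (pencil_poly a s).[t] = \prod_i (a i * t + s i).
Proof. by rewrite horner_prod; apply: eq_bigr => i _; rewrite hornerMXaddC hornerC. Qed.

Lemma horner_deriv_pencil_poly a s t :
  (pencil_poly a s)^`().[t] = adj_trace a (fun j => a j * t + s j).
Proof.
rewrite deriv_prod ?index_enum_uniq // horner_sum; apply: eq_bigr => i _.
rewrite hornerM horner_prod derivMXaddC derivC mul0r addr0 hornerC.
by congr (_ * _); apply: eq_bigr => j _; rewrite hornerMXaddC hornerC.
Qed.

End Pencil.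

Lemma map_pencil_poly (aR rR : comNzRingType) (f : {rmorphism aR -> rR}) n
    (a s : 'I_n -> aR) (b u : 'I_n -> rR) :
    (forall i, f (a i) = b i) -> (forall i, f (s i) = u i) ->
  map_poly f (pencil_poly a s) = pencil_poly b u.
Proof.
move=> fa fs; rewrite rmorph_prod; apply: eq_bigr => i _.
by rewrite rmorphD rmorphM /= !map_polyC map_polyX -fa -fs.
Qed.

Lemma rmorph_adj_trace (aR rR : comNzRingType) (f : {rmorphism aR -> rR}) n
    (a m : 'I_n -> aR) (b u : 'I_n -> rR) :
    (forall i, f (a i) = b i) -> (forall i, f (m i) = u i) ->
  f (adj_trace a m) = adj_trace b u.
Proof.
move=> fa fm; rewrite rmorph_sum; apply: eq_bigr => i _.
by rewrite rmorphM rmorph_prod -fa; congr (_ * _); apply: eq_bigr => j _; rewrite -fm.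
Qed.

Section PencilIdomain.
Variables (R : idomainType) (n : nat) (a : 'I_n -> R).

Lemma size_pencil_poly s : (forall i, a i = 0 -> s i != 0) ->
  size (pencil_poly a s) = #|[set i | a i != 0]|.+1.
Proof.
move=> s_neq0.
have size_factor i : size ((a i)%:P * 'X + (s i)%:P) = (a i != 0).+1.
  rewrite size_MXaddC !polyC_eq0 size_polyC.
  by have [/s_neq0/negPf->|] := eqVneq (a i) 0.
rewrite size_prod => [|i _]; last by rewrite -size_poly_eq0 size_factor.
under eq_bigr do rewrite size_factor -addn1.
by rewrite big_split /= sum1_card card_ord -addSn addnK -sum1dep_card [in RHS]big_mkcond.
Qed.

Lemma lead_coef_pencil_poly s :
  lead_coef (pencil_poly a s) = \prod_i (if a i == 0 then s i else a i).
Proof.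
rewrite lead_coef_prod; apply: eq_bigr => i _.
have [->|a_neq0] := eqVneq (a i) 0; first by rewrite mul0r add0r lead_coefC.
rewrite lead_coefDl ?lead_coefMX ?lead_coefC //.
by rewrite size_polyC size_mulX ?polyC_eq0 // size_polyC a_neq0; case: (_ != _).
Qed.

End PencilIdomain.

Lemma adj_trace_unit (F : fieldType) n (a m : 'I_n -> F) : (forall j, m j != 0) ->
  adj_trace a m = \prod_j m j * \sum_i a i / m i.
Proof.
move=> m_neq0; rewrite mulr_sumr; apply: eq_bigr => i _.
by rewrite [in RHS](bigD1 i) //=; field.
Qed.

Lemma pencil_poly_split (F : fieldType) n (a : 'I_n -> F) (rs : seq F) :
  size rs = #|[set i | a i != 0]| ->
  exists2 s, (forall i, a i = 0 -> s i = 1) &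
    pencil_poly a s = (\prod_(i | a i != 0) a i) *: \prod_(z <- rs) ('X - z%:P).
Proof.
move=> size_rs; pose e := enum [set i | a i != 0].
pose z i := nth 0 rs (index i e).
have rs_def : rs = map z e.
  apply: (@eq_from_nth _ 0); first by rewrite size_map size_rs cardE.
  move=> k; rewrite size_rs cardE => ke.
  have /card_gt0P[x0 _] : (0 < #|[set i | a i != 0%R]|)%N.
    by rewrite cardE (leq_ltn_trans _ ke).
  by rewrite (nth_map x0) // /z index_uniq ?enum_uniq.
exists (fun i => if a i != 0 then - (a i * z i) else 1).
  by move=> i ->; rewrite eqxx.
rewrite /pencil_poly (bigID (fun i => a i != 0)) /= [X in _ * X]big1 ?mulr1; last first.
  by move=> i /negPn/eqP ->; rewrite eqxx mul0r add0r.
rewrite rs_def big_map /e big_enum [X in _ *: X](eq_bigl (fun i => a i != 0)) => [|i];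
  last by rewrite inE.
rewrite -scaler_prod; apply: eq_bigr => i ai_neq0.
by rewrite ai_neq0 mul_polyC polyCN polyCM mul_polyC scalerBr.
Qed.

Section DiagTraceSpace.
Variables (F : fieldType) (n : nat) (A : 'M[F]_n).
Local Notation L := (diag_trace_space A).
Local Notation a := (fun i => A i i).
Local Notation pencil S := (pencil_poly a (fun i => S i i)).

Lemma diag_trace_spaceP (k : 'rV[F]_n) :
  L (diag_mx k) <-> \sum_i A i i * k 0 i = 0.
Proof.
rewrite /diag_trace_space; have -> : \tr (A *m diag_mx k) = \sum_i A i i * k 0 i.
  by rewrite mxtrace_mulC mxtrace_diag_mull; apply: eq_bigr => i _; rewrite mulrC.
split=> [[] // | tr0]; split=> //; first by rewrite /sym_mx tr_diag_mx.
by move=> i j ij; rewrite mxE (negPf ij) mulr0n.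
Qed.

Lemma diag_trace_spaceE K : L K -> exists2 k, K = diag_mx k & \sum_i A i i * k 0 i = 0.
Proof.
move=> LK; have [_ K_offdiag _] := LK.
have K_diag : K = diag_mx (\row_i K i i).
  by apply: diag_mx_of_is_diag; apply/is_diag_mxP => i j /K_offdiag.
by exists (\row_i K i i); rewrite // -diag_trace_spaceP -K_diag.
Qed.

Lemma invmx_diag_trace_space K : L K -> K \in unitmx ->
  is_diag_mx (invmx K) /\ adj_trace a (fun i => invmx K i i) = 0.
Proof.
move=> /diag_trace_spaceE[k -> tr0]; rewrite unitmx_diag => /forallP k_neq0.
rewrite invmx_diag //.
split; first by apply/is_diag_mxP => i j /negPf ij; rewrite mxE -val_eqE ij mulr0n.
have diag_inv i : diag_mx (\row_i (k 0 i)^-1) i i = (k 0 i)^-1.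
  by rewrite !mxE eqxx mulr1n.
rewrite adj_trace_unit => [|j]; last by rewrite diag_inv invr_eq0.
rewrite [X in _ * X](eq_bigr (fun i => A i i * k 0 i)) => [|i _].
  by rewrite tr0 mulr0.
by rewrite diag_inv invrK.
Qed.

Lemma reciprocal_variety_diag M : reciprocal_variety L M ->
  is_diag_mx M /\ adj_trace a (fun i => M i i) = 0.
Proof.
move=> M_rec; split.
  apply/is_diag_mxP => i j ij; rewrite -mx_eval_X; apply: M_rec => _ [K [LK K_unit ->]].
  rewrite mx_eval_X; have [/is_diag_mxP -> //] := invmx_diag_trace_space LK K_unit.
pose adj_trace_mpoly : {mpoly F[n * n]} :=
  adj_trace (fun i => (A i i)%:MP) (fun j => 'X_(mxvec_index j j)).
have eval_adj_trace N : mx_eval adj_trace_mpoly N = adj_trace a (fun i => N i i).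
  by apply: rmorph_adj_trace => i; [apply: mevalC | apply: mx_eval_X].
rewrite -eval_adj_trace; apply: M_rec => _ [K [LK K_unit ->]].
by rewrite eval_adj_trace; case: (invmx_diag_trace_space LK K_unit).
Qed.

Lemma orth_space_diag_proportional X i0 j :
  orth_space L X -> A i0 i0 * X j j = A j j * X i0 i0.
Proof.
case=> _ orthX.
pose w : 'rV_n := \row_l (A i0 i0 * (l == j)%:R - A j j * (l == i0)%:R).
have sum_w g : \sum_l w 0 l * g l = A i0 i0 * g j - A j j * g i0.
  under eq_bigr do rewrite mxE mulrBl -!mulrA.
  by rewrite sumrB -!mulr_sumr !sumr_kronecker.
have Lw : L (diag_mx w).
  apply/diag_trace_spaceP; under eq_bigr do rewrite mulrC.
  by rewrite sum_w mulrC subrr.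
by apply/eqP; rewrite -subr_eq0 -(sum_w (fun l => X l l)) -mxtrace_diag_mull orthX.
Qed.

Lemma support_card_neq1 : regular L -> #|[set i | A i i != 0]| != 1%N.
Proof.
case=> _ [/diag_trace_spaceE[k -> tr0]]; rewrite unitmx_diag => /forallP k_neq0.
apply/negP => /cards1P[i0 supp_i0].
have : i0 \in [set i | A i i != 0] by rewrite supp_i0 set11.
rewrite inE => a_i0; move: tr0; rewrite (bigD1 i0) //= big1 ?addr0 => [|i i_neq_i0].
  by apply/eqP; rewrite mulf_neq0.
have : i \notin [set i0] by rewrite in_set1.
by rewrite -supp_i0 inE negbK => /eqP ->; rewrite mul0r.
Qed.

Definition pencil_mx (S : 'M[F]_n) (t : F) : 'M[F]_n :=
  diag_mx (\row_i (A i i * t + S i i)).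

Lemma pencil_mx_inj S i0 : A i0 i0 != 0 -> injective (pencil_mx S).
Proof.
move=> a_neq0 t1 t2 /matrixP /(_ i0 i0); rewrite !mxE eqxx !mulr1n.
by move/addIr/(mulfI a_neq0).
Qed.

Lemma adj_trace_pencil_mx S t :
  adj_trace a (fun i => pencil_mx S t i i) = (pencil S)^`().[t].
Proof.
rewrite horner_deriv_pencil_poly; apply: eq_bigr => i _; congr (_ * _).
by apply: eq_bigr => j _; rewrite !mxE eqxx mulr1n.
Qed.

Lemma pencil_mx_solution S t :
    sym_mx S -> root (pencil S)^`() t -> ~~ root (pencil S) t ->
  reciprocal_variety L (pencil_mx S t) /\ orth_space L (pencil_mx S t - S).
Proof.
move=> S_sym /eqP h'_t; rewrite rootE horner_pencil_poly => /prodf_neq0 m_neq0.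
pose K := diag_mx (\row_j (A j j * t + S j j)^-1).
have K_inv : pencil_mx S t = invmx K.
  rewrite invmx_diag => [|j]; last by rewrite mxE invr_eq0 m_neq0.
  by apply/matrixP => i j; rewrite !mxE invrK.
have LK : L K.
  have prod_neq0 : \prod_j (A j j * t + S j j) != 0 by apply/prodf_neq0.
  apply/diag_trace_spaceP; move: h'_t.
  rewrite horner_deriv_pencil_poly adj_trace_unit => [|j]; last exact: m_neq0.
  move/eqP; rewrite mulf_eq0 (negPf prod_neq0) /= => /eqP {2}<-.
  by apply: eq_bigr => i _; rewrite mxE.
have K_unit : K \in unitmx.
  by rewrite unitmx_diag; apply/forallP => j; rewrite mxE invr_eq0 m_neq0.
split; first by move=> p p_van; apply: p_van; exists K.
split; first by rewrite /sym_mx linearB /= tr_diag_mx S_sym.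
move=> _ /diag_trace_spaceE[k -> tr0]; rewrite mxtrace_diag_mull.
transitivity (t * \sum_i A i i * k 0 i); last by rewrite tr0 mulr0.
rewrite mulr_sumr; apply: eq_bigr => i _; rewrite !mxE eqxx mulr1n addrK.
by rewrite mulrCA [RHS]mulrCA [k 0 i * t]mulrC.
Qed.

Lemma solution_pencil_mx S M i0 : A i0 i0 != 0 ->
    reciprocal_variety L M -> orth_space L (M - S) ->
  exists2 t, root (pencil S)^`() t & M = pencil_mx S t.
Proof.
move=> a_neq0 /reciprocal_variety_diag[/is_diag_mxP M_diag adj0] orthMS.
pose t := (M i0 i0 - S i0 i0) / A i0 i0.
have M_diag_entry j : M j j = A j j * t + S j j.
  have := orth_space_diag_proportional i0 j orthMS; rewrite !mxE.
  move=> prop; apply: (mulfI a_neq0).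
  by rewrite mulrDr mulrCA [A i0 i0 * (_ / _)]mulrCA mulfV // mulr1 -prop mulrBr subrK.
have M_pencil : M = pencil_mx S t.
  apply/matrixP => i j; rewrite !mxE; have [<-|ij] := eqVneq i j.
    by rewrite mulr1n M_diag_entry.
  by rewrite mulr0n M_diag.
by exists t; rewrite // rootE -adj_trace_pencil_mx -M_pencil adj0.
Qed.

End DiagTraceSpace.

Section GenericPoly.
Variables (F : numClosedFieldType) (n : nat) (A : 'M[F]_n).
Local Notation L := (diag_trace_space A).
Local Notation a := (fun i => A i i).
Local Notation r := #|[set i | A i i != 0]|.
Local Notation pencil S := (pencil_poly a (fun i => S i i)).
Local Notation ev S := (meval (fun k => mxvec S 0 k)).

Definition generic_pencil : {poly {mpoly F[n * n]}} :=
  pencil_poly (fun i => (A i i)%:MP) (fun i => 'X_(mxvec_index i i)).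

Definition generic_poly : {mpoly F[n * n]} :=
  let H := generic_pencil in
  lead_coef H * resultant H H^`() * resultant H^`() H^`()^`().

Lemma map_generic_pencil (S : 'M[F]_n) : map_poly (ev S) generic_pencil = pencil S.
Proof. by apply: map_pencil_poly => i; [apply: mevalC | apply: mx_eval_X]. Qed.

Lemma mx_eval_lead_generic_pencil (S : 'M[F]_n) :
  mx_eval (lead_coef generic_pencil) S = \prod_i (if A i i == 0 then S i i else A i i).
Proof.
rewrite lead_coef_pencil_poly /mx_eval rmorph_prod; apply: eq_bigr => i _.
by rewrite mpolyC_eq0; case: eqP => _; [apply: mx_eval_X | apply: mevalC].
Qed.

(* The leading coefficients of H, H' and H'' all survive the evaluation, so the
   resultants commute with it. *)
Lemma mx_eval_generic_poly (S : 'M[F]_n) :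
    (1 < r)%N -> (forall i, A i i = 0 -> S i i != 0) ->
  mx_eval generic_poly S = mx_eval (lead_coef generic_pencil) S *
    resultant (pencil S) (pencil S)^`() * resultant (pencil S)^`() (pencil S)^`()^`().
Proof.
move=> lt1r s_neq0.
have lead_neq0 : mx_eval (lead_coef generic_pencil) S != 0.
  rewrite mx_eval_lead_generic_pencil; apply/prodf_neq0 => i _.
  by have [/s_neq0|] := eqVneq (A i i) 0.
have size_h := size_pencil_poly s_neq0.
have size_H : size generic_pencil = r.+1.
  by rewrite -(size_map_poly_id0 lead_neq0) map_generic_pencil.
have lead'_neq0 : ev S (lead_coef generic_pencil^`()) != 0.
  apply: lead_coef_map_deriv_neq0; last by rewrite size_H ltnS ltnW.
  by rewrite -deriv_map map_generic_pencil size_deriv_char0 size_h size_H.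
have size_H' : size generic_pencil^`() = r.
  rewrite -(size_map_poly_id0 lead'_neq0) -deriv_map map_generic_pencil.
  by rewrite size_deriv_char0 size_h.
have lead''_neq0 : ev S (lead_coef generic_pencil^`()^`()) != 0.
  apply: lead_coef_map_deriv_neq0; last by rewrite size_H'.
  by rewrite -!deriv_map map_generic_pencil !size_deriv_char0 size_h size_H'.
rewrite /mx_eval /generic_poly !rmorphM /= (map_resultant_rmorph lead_neq0 lead'_neq0).
rewrite (map_resultant_rmorph lead'_neq0 lead''_neq0).
by rewrite -!deriv_map map_generic_pencil.
Qed.

Lemma generic_polyP (S : 'M[F]_n) : (1 < r)%N -> mx_eval generic_poly S != 0 ->
  [/\ size (pencil S) = r.+1, separable_poly (pencil S) & separable_poly (pencil S)^`()].
Proof.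
move=> lt1r gS_neq0.
have s_neq0 i : A i i = 0 -> S i i != 0.
  move=> a0; move: gS_neq0; rewrite /mx_eval /generic_poly !rmorphM /= !mulf_eq0.
  rewrite !negb_or -andbA => /andP[+ _]; rewrite -/(mx_eval _ S) mx_eval_lead_generic_pencil.
  by move/prodf_neq0/(_ i isT); rewrite a0 eqxx.
have size_h := size_pencil_poly s_neq0.
have h'_neq0 : (pencil S)^`() != 0.
  by rewrite -size_poly_eq0 size_deriv_char0 size_h -(subnKC lt1r).
have h_neq0 : pencil S != 0 by rewrite -size_poly_eq0 size_h.
move: gS_neq0; rewrite mx_eval_generic_poly // !mulf_eq0 !negb_or.
by rewrite !resultant_deriv_neq0 // => /andP[/andP[_ ->] ->].
Qed.

Lemma generic_poly_witness : (1 < r)%N ->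
  exists S, sym_mx S /\ mx_eval generic_poly S != 0.
Proof.
move=> lt1r; have [k r_eq] : exists k, r = k.+2 by exists r.-2; rewrite -(subnKC lt1r).
pose Q : {poly F} := 'X^(k.+2) - 'X.
have Q_monic : Q \is monic.
  by rewrite monicE /Q lead_coefDl ?lead_coefXn // size_polyXn size_opp size_polyX.
have [rs Q_eq] := closed_field_poly_normal Q.
rewrite (monicP Q_monic) scale1r in Q_eq.
have size_rs : size rs = r.
  have := congr1 (fun p : {poly F} => size p) Q_eq; rewrite /= size_prod_XsubC r_eq.
  by rewrite size_addl ?size_polyXn ?size_opp ?size_polyX // => -[].
have [s s1 h_eq] := pencil_poly_split size_rs.
pose S0 := diag_mx (\row_i s i); exists S0; split; first by rewrite /sym_mx tr_diag_mx.
have S0_diag i : S0 i i = s i by rewrite !mxE eqxx mulr1n.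
have s0_neq0 i : A i i = 0 -> S0 i i != 0.
  by move/s1; rewrite S0_diag => ->; apply: oner_neq0.
have c_neq0 : \prod_(i | A i i != 0) A i i != 0 by apply/prodf_neq0.
have h_eq' : pencil S0 = (\prod_(i | A i i != 0) A i i) *: Q.
  by rewrite Q_eq -h_eq; apply: eq_bigr => i _; rewrite S0_diag.
have Q_neq0 : Q != 0 by apply: monic_neq0.
have Q'_neq0 : Q^`() != 0 by apply: separable_poly_neq0; apply: separable_deriv_XnsubX.
rewrite mx_eval_generic_poly // h_eq' !mulf_neq0 //.
- rewrite mx_eval_lead_generic_pencil; apply/prodf_neq0 => i _.
  by have [/s0_neq0|] := eqVneq (A i i) 0.
- rewrite resultant_deriv_neq0 ?scaler_eq0 ?negb_or ?c_neq0 //.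
  by rewrite (eqp_separable (eqp_scale _ c_neq0)) separable_XnsubX.
- rewrite resultant_deriv_neq0 derivZ ?scaler_eq0 ?negb_or ?c_neq0 //.
  by rewrite (eqp_separable (eqp_scale _ c_neq0)) separable_deriv_XnsubX.
Qed.

Lemma ml_solutions_card S : (0 < r)%N -> sym_mx S ->
    size (pencil S) = r.+1 -> separable_poly (pencil S) ->
    separable_poly (pencil S)^`() ->
  has_card (fun M => reciprocal_variety L M /\ orth_space L (M - S)) r.-1.
Proof.
move=> /card_gt0P[i0]; rewrite inE => a_neq0 S_sym size_h sep_h sep_h'.
have [rs rs_uniq [size_rs root_rs]] := separable_roots sep_h'.
exists [seq pencil_mx A S t | t <- rs]; split.
- by rewrite map_inj_uniq //; apply: pencil_mx_inj a_neq0.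
- by rewrite size_map size_rs size_deriv_char0 size_h.
move=> M; split.
  case=> M_rec orthMS; have [t root_t ->] := solution_pencil_mx a_neq0 M_rec orthMS.
  by apply: map_f; rewrite -root_rs.
case/mapP => t t_rs ->; apply: pencil_mx_solution; rewrite ?root_rs //.
apply/negP => h_t; move: sep_h; rewrite unlock => /coprimep_root/(_ h_t).
by rewrite -rootE root_rs t_rs.
Qed.

End GenericPoly.

Theorem proposition3p7 (R : realType) (n : nat) (A : 'M[R[i]]_n) :
  is_diag_mx A -> A != 0 ->
  regular (diag_trace_space A) ->
  ml_degree_is (diag_trace_space A) (\rank A).-1.
Proof.
move=> A_diag A_neq0 A_reg; rewrite rank_is_diag_mx //.
have r_gt0 : (0 < #|[set i | A i i != 0%R]|)%N.
  by rewrite -rank_is_diag_mx // lt0n mxrank_eq0.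
have lt1r : (1 < #|[set i | A i i != 0%R]|)%N.
  by rewrite ltn_neqAle eq_sym support_card_neq1.
exists (generic_poly A); split; first exact: generic_poly_witness.
move=> S S_sym /(generic_polyP lt1r)[size_h sep_h sep_h'].
exact: ml_solutions_card.
Qed.
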